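(* Let $G$ be a reflection subgroup of $G_7$, and let $n$ be the number of distinct reflection conjugacy classes of $G$. Suppose there exists an integer $m\ge n$ such that $G$ is class-searchable at every length greater than $m$, and such that for every $k\in\{1,\dots,m\}$ the following holds: two length-$k$ reflection factorizations that generate $G$ are Hurwitz equivalent if and only if they factor the same element and have the same multiset of conjugacy classes. Then the same statement holds for every length $k\ge 1$.
   Context: Let $G_7$ be the subgroup of $GL_2(\mathbb{C})$ generated by $s=\begin{bmatrix}1&0\\0&-1\end{bmatrix}$, $t=\frac14\begin{bmatrix}(1+\sqrt3)+(-1+\sqrt3)i & (1+\sqrt3)+(-1+\sqrt3)i\\ (-1+\sqrt3)-(1+\sqrt3)i & (1-\sqrt3)+(1+\sqrt3)i\end{bmatrix}$ and $u=t^{\top}$ (presentation $\langle s,t,u\mid s^2=t^3=u^3=1,\ stu=ust=tus\rangle$, order $144$). A reflection is a linear map of $\mathbb{C}^2$ whose fixed space has dimension $1$; a reflection subgroup of $G_7$ is a subgroup generated by reflections of $G_7$, and its reflection conjugacy classes are its conjugacy classes consisting of reflections. A reflection factorization of $g\in G$ of length $k$ is a tuple $(r_1,\dots,r_k)$ of reflections in $G$ with $r_1\cdots r_k=g$; it generates $\langle r_1,\dots,r_k\rangle$, and (when it generates $G$) its multiset of conjugacy classes is the multiset of $G$-conjugacy classes of its entries. The Hurwitz move $\sigma_i$ sends $(r_1,\dots,r_k)$ to $(r_1,\dots,r_{i-1},r_{i+1},r_{i+1}^{-1}r_ir_{i+1},r_{i+2},\dots,r_k)$; two factorizations are Hurwitz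 equivalent if one is obtained from the other by a finite sequence of Hurwitz moves. $G$ is class-searchable at length $k$ if: whenever $T$ is a length-$k$ reflection factorization generating $G$ and $K$ is a reflection conjugacy class of $G$ containing at least two entries of $T$, then for every $x\in K$ there is a factorization $T'$ Hurwitz equivalent to $T$ whose last entry is $x$ and whose first $k-1$ entries generate $G$. *)

From mathcomp Require Import all_boot all_order all_algebra all_field.
From Stdlib Require Import Relations Permutation.
From Stdlib Require List.
Set Implicit Arguments. Unset Strict Implicit. Unset Printing Implicit Defensive.
Import Order.TTheory GRing.Theory Num.Theory.
Local Open Scope ring_scope.

Definition mx := 'M[algC]_2.

Definition mx_of_list (L : seq (seq algC)) : mx :=
  \matrix_(i < 2, j < 2) nth 0 (nth [::] L i) j.

Definition r3 : algC := sqrtC 3%:R.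

Definition G7_s : mx := mx_of_list [:: [:: 1; 0]; [:: 0; -1]].
Definition G7_t : mx := (4%:R)^-1 *:
  mx_of_list [:: [:: (1 + r3) + (-1 + r3) * 'i; (1 + r3) + (-1 + r3) * 'i];
                 [:: (-1 + r3) - (1 + r3) * 'i; (1 - r3) + (1 + r3) * 'i]].
Definition G7_u : mx := G7_t^T.

Inductive gen (S : mx -> Prop) : mx -> Prop :=
| gen_one : gen S 1
| gen_elt x : S x -> gen S x
| gen_mul x y : gen S x -> gen S y -> gen S (x * y)
| gen_inv x : gen S x -> gen S (invmx x).

Definition G7 : mx -> Prop := gen (fun x => x = G7_s \/ x = G7_t \/ x = G7_u).

(* A reflection: fixed space {v | g v = v} of dimension 1. *)
Definition is_reflection (g : mx) : Prop := \rank (kermx (g - 1)^T) = 1%N.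

Definition conjugate_in (G : mx -> Prop) (x y : mx) : Prop :=
  exists h, G h /\ x = invmx h * y * h.

Definition num_refl_classes (G : mx -> Prop) (n : nat) : Prop :=
  exists reps : seq mx,
    size reps = n /\
    (forall r, r \in reps -> G r /\ is_reflection r) /\
    (forall i j, (i < n)%N -> (j < n)%N ->
        conjugate_in G (nth 0 reps i) (nth 0 reps j) -> i = j) /\
    (forall r, G r -> is_reflection r -> exists2 c, c \in reps & conjugate_in G r c).

Definition refl_fact (G : mx -> Prop) (T : seq mx) : Prop :=
  forall r, r \in T -> G r /\ is_reflection r.

Definition prodT (T : seq mx) : mx := \prod_(r <- T) r.

Definition generates (G : mx -> Prop) (T : seq mx) : Prop :=
  forall x, G x <-> gen (fun r => r \in T) x.

(* Hurwitz move sigma_{i+1} (0-based index i, requires i+1 < size T). *)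
Definition hmove (i : nat) (T : seq mx) : seq mx :=
  take i T ++ [:: nth 0 T i.+1; invmx (nth 0 T i.+1) * nth 0 T i * nth 0 T i.+1]
    ++ drop i.+2 T.

Definition hstep (T T' : seq mx) : Prop :=
  exists i, (i.+1 < size T)%N /\ T' = hmove i T.

Definition hurwitz_equiv : seq mx -> seq mx -> Prop := clos_refl_trans _ hstep.

Definition same_classes (G : mx -> Prop) (T T' : seq mx) : Prop :=
  exists U, Permutation T U /\ List.Forall2 (conjugate_in G) U T'.

Definition class_searchable (G : mx -> Prop) (k : nat) : Prop :=
  forall T : seq mx, size T = k -> refl_fact G T -> generates G T ->
  forall c, G c -> is_reflection c ->
  (exists i j, (i < j)%N /\ (j < k)%N /\
      conjugate_in G (nth 0 T i) c /\ conjugate_in G (nth 0 T j) c) ->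
  forall x, conjugate_in G x c ->
  exists T', hurwitz_equiv T T' /\ last 0 T' = x /\ generates G (take k.-1 T').

Definition hurwitz_criterion (G : mx -> Prop) (k : nat) : Prop :=
  forall T T' : seq mx, size T = k -> size T' = k ->
  refl_fact G T -> refl_fact G T' -> generates G T -> generates G T' ->
  (hurwitz_equiv T T' <-> prodT T = prodT T' /\ same_classes G T T').

From Stdlib Require Import Relations Permutation Classical_Prop.
From Stdlib Require List.
From mathcomp Require Import all_boot all_order all_algebra all_field ring zify.
Set Implicit Arguments. Unset Strict Implicit. Unset Printing Implicit Defensive.
Import Order.TTheory GRing.Theory Num.Theory.
Local Open Scope ring_scope.

(* Once k > m >= n, a generating factorization T has
   more entries than there are reflection classes, so some class c occurs twice
   in T, and also in any T' with the same classes.  Class-searchability moves c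
   to the last position of both, leaving generating prefixes P and P' of length
   k - 1 with equal products and, after cancelling c, equal classes; so P ~ P'
   by the criterion at length k - 1, and T ~ P c ~ P' c ~ T'.  The last step
   runs a Hurwitz path backwards, which is possible because the square of a
   Hurwitz move conjugates the pair by its product and every element of G7 has
   order dividing 12; the latter is checked by exact computation over
   Z[sqrt 3, i] on the 144 elements of G7. *)

Lemma expr_eq1_unit (R : unitRingType) (x : R) n : x ^+ n.+1 = 1 -> x \is a GRing.unit.
Proof. by move=> xn1; apply/unitrP; exists (x ^+ n); rewrite -exprS -exprSr xn1. Qed.

Lemma expr_eq1_inv (R : unitRingType) (x : R) n : x ^+ n.+1 = 1 -> x^-1 = x ^+ n.
Proof.
move=> xn1; have xU := expr_eq1_unit xn1.
by apply: (mulrI xU); rewrite mulrV // -exprS xn1.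
Qed.

(** * Hurwitz moves on pairs *)

Section Braid.
Variable R : unitRingType.

Definition braid (p : R * R) : R * R := (p.2, p.2^-1 * p.1 * p.2).

Definition conj_pair (h : R) (p : R * R) : R * R := (h^-1 * p.1 * h, h^-1 * p.2 * h).

Lemma conj_pairM h k p : h \is a GRing.unit -> k \is a GRing.unit ->
  conj_pair k (conj_pair h p) = conj_pair (h * k) p.
Proof. by move=> hU kU; rewrite /conj_pair /= invrM // !mulrA. Qed.

Lemma braid2 p : p.1 \is a GRing.unit -> p.2 \is a GRing.unit ->
  braid (braid p) = conj_pair (p.1 * p.2) p.
Proof.
case: p => x y /= xU yU; rewrite /braid /conj_pair /= !invrM ?unitrMl ?unitrV // invrK.
by congr (_, _); rewrite !mulrA ?divrK ?mulrK.
Qed.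

Lemma iter_braid_double x y j : x \is a GRing.unit -> y \is a GRing.unit ->
  iter (2 * j) braid (x, y) = conj_pair ((x * y) ^+ j) (x, y).
Proof.
move=> xU yU; have gU : x * y \is a GRing.unit by rewrite unitrMl.
elim: j => [|j IHj]; first by rewrite /conj_pair /= invr1 !mul1r !mulr1.
set h := (x * y) ^+ j in IHj *; have hU : h \is a GRing.unit by rewrite unitrX.
have conjU z : z \is a GRing.unit -> h^-1 * z * h \is a GRing.unit.
  by move=> zU; rewrite !unitrMl ?unitrV.
have -> : iter (2 * j.+1) braid (x, y) = braid (braid (conj_pair h (x, y))).
  by rewrite mulnS iterD IHj.
rewrite braid2 ?conjU //=.
have -> : h^-1 * x * h * (h^-1 * y * h) = h^-1 * (x * y) * h.
  by rewrite !mulrA mulrK.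
by rewrite conj_pairM ?conjU // !mulrA mulrV // mul1r /h -exprS.
Qed.

Lemma iter_braid_period x y N : x \is a GRing.unit -> y \is a GRing.unit ->
  (x * y) ^+ N = 1 -> iter (2 * N) braid (x, y) = (x, y).
Proof.
by move=> xU yU xyN; rewrite iter_braid_double // xyN /conj_pair /= invr1 !mul1r !mulr1.
Qed.

End Braid.

Arguments braid {R} p.

Lemma Forall2_diag (A : Type) (R : A -> A -> Prop) l :
  (forall x, R x x) -> List.Forall2 R l l.
Proof. by move=> Rxx; elim: l => [|x l IHl]; constructor. Qed.

Lemma Forall2_compose (A B C : Type) (R : A -> B -> Prop) (S : B -> C -> Prop)
    (RS : A -> C -> Prop) l1 l2 l3 :
  (forall x y z, R x y -> S y z -> RS x z) ->
  List.Forall2 R l1 l2 -> List.Forall2 S l2 l3 -> List.Forall2 RS l1 l3.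
Proof.
move=> RS_of F12; elim: F12 l3 => [|x y l1' l2' Rxy _ IHF] l3 F23; inversion F23.
  by constructor.
by constructor; [apply: RS_of Rxy _ | apply: IHF].
Qed.

Lemma Forall2_cons_inv_l (A B : Type) (R : A -> B -> Prop) x l l' :
  List.Forall2 R (x :: l) l' ->
  exists y l'', [/\ l' = y :: l'', R x y & List.Forall2 R l l''].
Proof.
case: l' => [|y l''] F; first by inversion F.
by case/List.Forall2_cons_iff: F; exists y, l''.
Qed.

Lemma pigeonhole_Permutation (X Y : eqType) (P : X -> Y -> Prop) (S : seq Y) (T : seq X) :
  (forall x, x \in T -> exists2 c, c \in S & P x c) -> (size S < size T)%N ->
  exists2 c, c \in S & exists x y L, [/\ Permutation T [:: x, y & L], P x c & P y c].
Proof.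
elim: T S => [|x T IHT] S // coverT ltST.
have [c Sc Pxc] := coverT x (mem_head x T).
have [[y [Ty Pyc]]|noPc] := classic (exists y, y \in T /\ P y c).
  exists c => //; case/splitPr: Ty Pyc => A B Pyc; exists x, y, (A ++ B); split=> //.
  exact/perm_skip/Permutation_sym/Permutation_middle.
have coverT' z : z \in T -> exists2 c', c' \in rem c S & P z c'.
  move=> Tz; have [c' Sc' Pzc'] := coverT z (@mem_behead _ (x :: T) z Tz).
  exists c' => //; apply: rem_mem Sc'; apply/eqP => c'c.
  by apply: noPc; exists z; rewrite -c'c.
have [|c' /mem_rem Sc' [x' [y' [L [TL Px'c' Py'c']]]]] := IHT _ coverT'.
  by rewrite size_rem // -ltnS prednK //; case: (S) Sc.
exists c' => //; exists x', y', (x :: L); split=> //.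
apply: Permutation_trans (perm_skip x TL) _.
exact: Permutation_trans (perm_swap _ _ _) (perm_skip _ (perm_swap _ _ _)).
Qed.

Lemma cat_cons2_nth (P : mx -> Prop) L1 u L2 v L3 : P u -> P v ->
  let T := L1 ++ u :: L2 ++ v :: L3 in
  exists i j, [/\ (i < j)%N, (j < size T)%N, P (nth 0 T i) & P (nth 0 T j)].
Proof.
move=> Pu Pv; exists (size L1), (size L1 + (size L2).+1)%N.
rewrite !size_cat /= size_cat /= !nth_cat ltnn subnn; split=> //; try lia.
have -> : (size L1 + (size L2).+1 < size L1)%N = false by lia.
by rewrite addKn /= nth_cat ltnn subnn.
Qed.

Lemma Permutation_cons2_nth (P : mx -> Prop) T x y L :
  Permutation T [:: x, y & L] -> P x -> P y ->
  exists i j, [/\ (i < j)%N, (j < size T)%N, P (nth 0 T i) & P (nth 0 T j)].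
Proof.
move=> TL Px Py.
have LT := Permutation_sym TL.
have [A [B defT]] := List.in_split x T (Permutation_in x LT (List.in_eq x _)).
subst T; have yL : Permutation (y :: L) (A ++ B) := Permutation_cons_app_inv A B LT.
case: (List.in_app_or A B y (Permutation_in y yL (List.in_eq y L))) => [yA|yB].
  have [C [D ->]] := List.in_split y A yA.
  by rewrite -List.app_assoc; apply: cat_cons2_nth.
by have [C [D ->]] := List.in_split y B yB; apply: cat_cons2_nth.
Qed.

Lemma is_reflection_conj a b : b \is a GRing.unit -> is_reflection a ->
  is_reflection (b^-1 * a * b).
Proof.
move=> bU; rewrite /is_reflection !mxrank_ker !mxrank_tr.
have -> : b^-1 * a * b - 1 = invmx b *m (a - 1) *m b.
  by rewrite !mulmxE mulrBr mulrBl mulr1 mulVr.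
rewrite mxrankMfree ?row_free_unit //.
by rewrite eqmxMfull // row_full_unit unitmx_inv.
Qed.

Lemma prodT_cons a T : prodT (a :: T) = a * prodT T.
Proof. by rewrite /prodT big_cons. Qed.

Lemma prodT_cat T T' : prodT (T ++ T') = prodT T * prodT T'.
Proof. by rewrite /prodT big_cat. Qed.

Lemma prodT_rcons T a : prodT (rcons T a) = prodT T * a.
Proof. by rewrite -cats1 prodT_cat prodT_cons /prodT big_nil mulr1. Qed.

Lemma hstepP T T' : hstep T T' <->
  exists A a b B, T = A ++ a :: b :: B /\ T' = A ++ b :: b^-1 * a * b :: B.
Proof.
split=> [[i [iT ->]]|[A [a [b [B [-> ->]]]]]].
  exists (take i T), (nth 0 T i), (nth 0 T i.+1), (drop i.+2 T); split=> //.
  by rewrite -{1}(cat_take_drop i T) (drop_nth 0 (ltnW iT)) (drop_nth 0 iT).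
exists (size A); split; first by rewrite size_cat /= !addnS ltnS leq_addr.
rewrite /hmove take_size_cat // !nth_cat ltnn subnn /= ltnNge leqnSn /= subSn // subnn /=.
by rewrite (catA A [:: a; b] B) drop_size_cat // size_cat addn2.
Qed.

Lemma hurwitz_equiv_rcons T T' c :
  hurwitz_equiv T T' -> hurwitz_equiv (rcons T c) (rcons T' c).
Proof.
elim=> [X Y /hstepP [A [a [b [B [-> ->]]]]]|X|X Y Z _ XY _ YZ].
- by apply/rt_step/hstepP; exists A, a, b, (rcons B c); rewrite !rcons_cat.
- exact: rt_refl.
- exact: rt_trans XY YZ.
Qed.

Lemma hurwitz_equiv_iter_braid A B j p :
  hurwitz_equiv (A ++ p.1 :: p.2 :: B)
                (A ++ (iter j braid p).1 :: (iter j braid p).2 :: B).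
Proof.
elim: j => [|j IHj]; first exact: rt_refl.
apply: rt_trans IHj (rt_step _ _ _ _ _); apply/hstepP.
by exists A, (iter j braid p).1, (iter j braid p).2, B.
Qed.

Lemma invmxE (x : mx) : invmx x = x^-1.
Proof. by []. Qed.

(** * Hurwitz equivalence in a subgroup of finite exponent *)

Section FiniteExponentSubgroup.

Variables (G : mx -> Prop) (N : nat).
Hypotheses (G1 : G 1) (GM : forall x y, G x -> G y -> G (x * y))
  (GV : forall x, G x -> G x^-1) (G_exponent : forall x, G x -> x ^+ N.+1 = 1).

Lemma G_unit x : G x -> x \is a GRing.unit.
Proof. by move/G_exponent/expr_eq1_unit. Qed.

Lemma conjugate_in_refl x : conjugate_in G x x.
Proof. by exists 1; split; rewrite // invmxE invr1 mul1r mulr1. Qed.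

Lemma conjugate_in_sym x y : conjugate_in G x y -> conjugate_in G y x.
Proof.
case=> h [Gh ->]; exists h^-1; split; first exact: GV.
by rewrite !invmxE invrK !mulrA mulrV ?mul1r ?mulrK ?G_unit.
Qed.

Lemma conjugate_in_trans x y z :
  conjugate_in G x y -> conjugate_in G y z -> conjugate_in G x z.
Proof.
case=> h [Gh ->] [k [Gk ->]]; exists (k * h); split; first exact: GM.
by rewrite !invmxE invrM ?G_unit // !mulrA.
Qed.

Lemma conjugate_in_conjg a b : G b -> conjugate_in G (b^-1 * a * b) a.
Proof. by exists b. Qed.

Lemma same_classes_refl T : same_classes G T T.
Proof.
by exists T; split; [apply: Permutation_refl | apply: Forall2_diag conjugate_in_refl].
Qed.

Lemma same_classes_perm T T' : Permutation T T' -> same_classes G T T'.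
Proof. by exists T'; split=> //; apply: Forall2_diag conjugate_in_refl. Qed.

Lemma same_classes_sym T T' : same_classes G T T' -> same_classes G T' T.
Proof.
case=> U [TU UT']; have [V [T'V TV]] := Permutation_Forall2 (Permutation_sym TU) UT'.
exists V; split=> //.
apply: List.Forall2_impl (List.Forall2_flip TV) => x y.
exact: conjugate_in_sym.
Qed.

Lemma same_classes_trans T1 T2 T3 :
  same_classes G T1 T2 -> same_classes G T2 T3 -> same_classes G T1 T3.
Proof.
case=> U [T1U UT2] [V [T2V VT3]].
have [W [UW VW]] := Permutation_Forall2 T2V (List.Forall2_flip UT2).
exists W; split; first exact: Permutation_trans T1U UW.
exact: Forall2_compose conjugate_in_trans (List.Forall2_flip VW) VT3.
Qed.

Lemma same_classes_consK c T T' :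
  same_classes G (c :: T) (c :: T') -> same_classes G T T'.
Proof.
case=> U [cTU UcT'].
have [A [B defU]] := List.in_split c U (Permutation_in c cTU (List.in_eq c T)).
subst U; have TAB : Permutation T (A ++ B) := Permutation_cons_app_inv A B cTU.
apply: same_classes_trans (same_classes_perm TAB) _.
case: A {cTU TAB} UcT' => [|a A] /List.Forall2_cons_iff [ac F].
  by exists B; split; first apply: Permutation_refl.
have [A' [CB' [AA' [cBCB' ->]]]] := List.Forall2_app_inv_l _ _ F.
have [c' [B' [-> cc' BB']]] := Forall2_cons_inv_l cBCB'.
apply: same_classes_trans (same_classes_perm (Permutation_middle A' B' c')).
exists (a :: A ++ B); split; first exact: Permutation_refl.
by constructor; [apply: conjugate_in_trans ac cc' | apply: List.Forall2_app].
Qed.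

Lemma refl_fact_pair A a b B : refl_fact G (A ++ [:: a, b & B]) ->
  (G a /\ is_reflection a) /\ (G b /\ is_reflection b).
Proof. by move=> rfT; split; apply: rfT; rewrite mem_cat !inE eqxx ?orbT. Qed.

Lemma hstep_invariants T T' : hstep T T' -> refl_fact G T ->
  [/\ refl_fact G T', prodT T' = prodT T, same_classes G T T' & size T' = size T].
Proof.
move=> /hstepP [A [a [b [B [-> ->]]]]] rfT.
have [[Ga ra] [Gb rb]] := refl_fact_pair rfT.
have bU := G_unit Gb; split.
- move=> r; rewrite mem_cat => /orP [rA|]; first by apply: rfT; rewrite mem_cat rA.
  rewrite !inE => /or3P [/eqP->|/eqP->|rB]; first by [].
    by split; [apply: GM (GM (GV Gb) Ga) Gb | apply: is_reflection_conj].
  by apply: rfT; rewrite mem_cat !inE rB !orbT.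
- by rewrite !prodT_cat !prodT_cons !mulrA mulrK.
- exists (A ++ [:: b, a & B]); split; first exact/Permutation_app_head/perm_swap.
  apply: List.Forall2_app; first exact: Forall2_diag conjugate_in_refl.
  constructor; first exact: conjugate_in_refl.
  constructor; first exact/conjugate_in_sym/conjugate_in_conjg.
  exact: Forall2_diag conjugate_in_refl.
- by rewrite !size_cat.
Qed.

Lemma hurwitz_equiv_invariants T T' : hurwitz_equiv T T' -> refl_fact G T ->
  [/\ refl_fact G T', prodT T' = prodT T, same_classes G T T' & size T' = size T].
Proof.
elim=> [X Y|X rfX|X Y Z _ IHXY _ IHYZ rfX]; first exact: hstep_invariants.
  by split=> //; apply: same_classes_refl.
have [rfY pXY cXY sXY] := IHXY rfX; have [rfZ pYZ cYZ sYZ] := IHYZ rfY.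
by split=> //; [rewrite pYZ | apply: same_classes_trans cXY cYZ | rewrite sYZ].
Qed.

(* A Hurwitz move is undone by [2 (N + 1) - 1] further moves, since its square
   conjugates the pair by its product, an element of order dividing [N + 1]. *)
Lemma hstep_sym T T' : hstep T T' -> refl_fact G T -> hurwitz_equiv T' T.
Proof.
move=> /hstepP [A [a [b [B [-> ->]]]]] rfT.
have [[Ga _] [Gb _]] := refl_fact_pair rfT.
have := hurwitz_equiv_iter_braid A B (2 * N.+1).-1 (braid (a, b)).
have period := iter_braid_period (G_unit Ga) (G_unit Gb) (G_exponent (GM Ga Gb)).
by rewrite -iterSr prednK ?muln_gt0 // period.
Qed.

Lemma hurwitz_equiv_sym T T' : hurwitz_equiv T T' -> refl_fact G T -> hurwitz_equiv T' T.
Proof.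
elim=> [X Y|X _|X Y Z XY IHXY _ IHYZ rfX]; first exact: hstep_sym.
  exact: rt_refl.
have [rfY _ _ _] := hurwitz_equiv_invariants XY rfX.
exact: rt_trans (IHYZ rfY) (IHXY rfX).
Qed.

Lemma hurwitz_criterion0 : hurwitz_criterion G 0.
Proof.
move=> [|? ?] [|? ?] // *; split=> _; last exact: rt_refl.
by split=> //; apply: same_classes_refl.
Qed.

Definition two_in_class (c : mx) (T : seq mx) : Prop :=
  exists x y L, [/\ Permutation T [:: x, y & L], conjugate_in G x c & conjugate_in G y c].

Lemma two_in_class_of_reps n T : num_refl_classes G n -> refl_fact G T ->
  (n < size T)%N -> exists2 c, G c /\ is_reflection c & two_in_class c T.
Proof.
case=> reps [<- [reps_refl [_ reps_cover]]] rfT ltnT.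
have [|c repc twoT] := pigeonhole_Permutation (P := conjugate_in G) _ ltnT.
  by move=> x /rfT [Gx reflx]; apply: reps_cover.
by exists c; first exact: reps_refl.
Qed.

Lemma two_in_class_same_classes c T T' :
  same_classes G T T' -> two_in_class c T -> two_in_class c T'.
Proof.
case=> U [TU UT'] [x [y [L [TL xc yc]]]].
have [V [T'V LV]] := Permutation_Forall2 (Permutation_trans (Permutation_sym TU) TL) UT'.
have [x' [V' [defV xx' LV']]] := Forall2_cons_inv_l LV.
have [y' [L' [defV' yy' _]]] := Forall2_cons_inv_l LV'; subst V V'.
exists x', y', L'; split=> //.
  exact: conjugate_in_trans (conjugate_in_sym xx') xc.
exact: conjugate_in_trans (conjugate_in_sym yy') yc.
Qed.

Lemma class_searchable_last k T c : class_searchable G k -> size T = k ->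
  refl_fact G T -> generates G T -> G c -> is_reflection c -> two_in_class c T ->
  exists P, [/\ hurwitz_equiv T (rcons P c), size P = k.-1 & generates G P].
Proof.
move=> search sizeT rfT genT Gc reflc [x [y [L [TL xc yc]]]].
have [i [j [ij jT Tic Tjc]]] :=
  Permutation_cons2_nth (P := fun z => conjugate_in G z c) TL xc yc.
have [|T1 [TT1 [lastT1 genP]]] :=
  search T sizeT rfT genT c Gc reflc _ c (conjugate_in_refl c).
  by exists i, j; rewrite -sizeT.
have [_ _ _ sizeT1] := hurwitz_equiv_invariants TT1 rfT; subst k.
exists (take (size T).-1 T1); rewrite size_takel ?sizeT1 ?leq_pred //; split=> //.
move: sizeT1 lastT1 TT1; case/lastP: T1 {genP} => [/esym T0|P z].
  by rewrite T0 in jT.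
by rewrite size_rcons last_rcons => <- ->; rewrite /= -cats1 take_size_cat // cats1.
Qed.

Lemma Permutation_rcons (s : seq mx) x : Permutation (rcons s x) (x :: s).
Proof. by rewrite -cats1; apply/Permutation_sym/Permutation_cons_append. Qed.

Lemma same_classes_rconsK c T T' :
  same_classes G (rcons T c) (rcons T' c) -> same_classes G T T'.
Proof.
move=> TT'; apply: (@same_classes_consK c).
apply: same_classes_trans (same_classes_perm (Permutation_rcons T' c)).
exact: same_classes_trans (same_classes_perm (Permutation_sym (Permutation_rcons T c))) TT'.
Qed.

Lemma hurwitz_criterion_succ n k : num_refl_classes G n -> (n < k)%N ->
  class_searchable G k -> hurwitz_criterion G k.-1 -> hurwitz_criterion G k.
Proof.
move=> classes ltnk search crit T T' sizeT sizeT' rfT rfT' genT genT'; split.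
  by move=> /hurwitz_equiv_invariants /(_ rfT) [_ <- ? _].
case=> prodTT' classesTT'.
have ltnT : (n < size T)%N by rewrite sizeT.
have [c [Gc reflc] twoT] := two_in_class_of_reps classes rfT ltnT.
have twoT' := two_in_class_same_classes classesTT' twoT.
have [P [TP sizeP genP]] := class_searchable_last search sizeT rfT genT Gc reflc twoT.
have [P' [TP' sizeP' genP']] :=
  class_searchable_last search sizeT' rfT' genT' Gc reflc twoT'.
have [rfPc prodP classesP _] := hurwitz_equiv_invariants TP rfT.
have [rfP'c prodP' classesP' _] := hurwitz_equiv_invariants TP' rfT'.
have rf_prefix Q : refl_fact G (rcons Q c) -> refl_fact G Q.
  by move=> rfQ r Qr; apply: rfQ; rewrite mem_rcons inE Qr orbT.
have PP' : hurwitz_equiv P P'.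
  apply/(crit P P' sizeP sizeP' (rf_prefix P rfPc) (rf_prefix P' rfP'c) genP genP').
  split; first by apply: (mulIr (G_unit Gc)); rewrite -!prodT_rcons prodP prodP'.
  apply: same_classes_rconsK (same_classes_trans (same_classes_sym classesP) _).
  exact: same_classes_trans classesTT' classesP'.
apply: rt_trans TP _.
exact: rt_trans (hurwitz_equiv_rcons c PP') (hurwitz_equiv_sym TP' rfT').
Qed.

End FiniteExponentSubgroup.

(** * The exponent of G7 *)

(* [(a, b, c, d)] encodes [a + b r3 + c 'i + d r3 'i] in Z[sqrt 3, i]. *)
Definition zr3i := (int * int * int * int)%type.

Definition zr3i_add (x y : zr3i) : zr3i :=
  let: (a, b, c, d) := x in let: (a', b', c', d') := y in
  (a + a', b + b', c + c', d + d').

Definition zr3i_mul (x y : zr3i) : zr3i :=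
  let: (a, b, c, d) := x in let: (a', b', c', d') := y in
  (a * a' + 3 * (b * b') - c * c' - 3 * (d * d'),
   a * b' + b * a' - c * d' - d * c',
   a * c' + c * a' + 3 * (b * d') + 3 * (d * b'),
   a * d' + d * a' + b * c' + c * b').

Definition zr3i_map (f : int -> int) (x : zr3i) : zr3i :=
  let: (a, b, c, d) := x in (f a, f b, f c, f d).

Definition zr3i_val (x : zr3i) : algC :=
  let: (a, b, c, d) := x in a%:~R + b%:~R * r3 + c%:~R * 'i + d%:~R * (r3 * 'i).

Lemma r3_sqr : r3 * r3 = 3.
Proof. by rewrite -expr2 sqrtCK. Qed.

Lemma i_sqr : 'i * 'i = -1 :> algC.
Proof. by rewrite -expr2 sqrCi. Qed.

Lemma zr3i_val_add x y : zr3i_val (zr3i_add x y) = zr3i_val x + zr3i_val y.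
Proof.
case: x => [[[a b] c] d]; case: y => [[[a' b'] c'] d'] /=.
rewrite !intrD; ring.
Qed.

Lemma zr3i_val_mul x y : zr3i_val (zr3i_mul x y) = zr3i_val x * zr3i_val y.
Proof.
case: x => [[[a b] c] d]; case: y => [[[a' b'] c'] d'] /=.
rewrite !(intrD, intrB, intrM); ring: r3_sqr i_sqr.
Qed.

Lemma zr3i_val_scale4 x : zr3i_val (zr3i_map ( *%R 4) x) = 4 * zr3i_val x.
Proof. case: x => [[[a b] c] d] /=; rewrite !intrM; ring. Qed.

(* [(a, b, c, d)] encodes the matrix [1/4 [[a, b], [c, d]]]: the entries of
   [G7] lie in [1/4 Z[sqrt 3, i]]. *)
Definition zmx := (zr3i * zr3i * zr3i * zr3i)%type.

Definition zmx_mul (A B : zmx) : zmx :=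
  let: (a, b, c, d) := A in let: (a', b', c', d') := B in
  (zr3i_add (zr3i_mul a a') (zr3i_mul b c'), zr3i_add (zr3i_mul a b') (zr3i_mul b d'),
   zr3i_add (zr3i_mul c a') (zr3i_mul d c'), zr3i_add (zr3i_mul c b') (zr3i_mul d d')).

Definition zmx_map (f : int -> int) (A : zmx) : zmx :=
  let: (a, b, c, d) := A in (zr3i_map f a, zr3i_map f b, zr3i_map f c, zr3i_map f d).

Definition zmx_mul4 (A B : zmx) : zmx := zmx_map (fun z => (z %/ 4)%Z) (zmx_mul A B).

Definition zmx_mul4_exact (A B : zmx) : bool :=
  zmx_map ( *%R 4) (zmx_mul4 A B) == zmx_mul A B.

Definition zmx_mx (A : zmx) : mx :=
  let: (a, b, c, d) := A in
  mx_of_list [:: [:: zr3i_val a; zr3i_val b]; [:: zr3i_val c; zr3i_val d]].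

Definition zmx_val (A : zmx) : mx := 4^-1 *: zmx_mx A.

Lemma zmx_mx_mul A B : zmx_mx (zmx_mul A B) = zmx_mx A * zmx_mx B.
Proof.
case: A => [[[a b] c] d]; case: B => [[[a' b'] c'] d'].
apply/matrixP => i j; rewrite !mxE big_ord_recr big_ord1 /= !mxE.
by case: i => [[|[|//]] ?]; case: j => [[|[|//]] ?]; rewrite /= zr3i_val_add !zr3i_val_mul.
Qed.

Lemma zmx_mx_scale4 A : zmx_mx (zmx_map ( *%R 4) A) = 4 *: zmx_mx A.
Proof.
case: A => [[[a b] c] d]; apply/matrixP => i j; rewrite !mxE.
by case: i => [[|[|//]] ?]; case: j => [[|[|//]] ?]; rewrite /= zr3i_val_scale4.
Qed.

Lemma zmx_val_mul4 A B :
  zmx_mul4_exact A B -> zmx_val (zmx_mul4 A B) = zmx_val A * zmx_val B.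
Proof.
move=> /eqP exact4; have n4 : (4 : algC) != 0 by rewrite pnatr_eq0.
rewrite /zmx_val -scalerAl -scalerAr scalerA -zmx_mx_mul -exact4 zmx_mx_scale4.
by rewrite scalerA -mulrA mulVf // mulr1.
Qed.

Definition zmx1 : zmx := ((4, 0, 0, 0), (0, 0, 0, 0), (0, 0, 0, 0), (4, 0, 0, 0)).

Fixpoint zmx_mulX_is1 (P A : zmx) (n : nat) : bool :=
  if n is n'.+1 then zmx_mul4_exact P A && zmx_mulX_is1 (zmx_mul4 P A) A n'
  else P == zmx1.

Lemma zmx_val1 : zmx_val zmx1 = 1.
Proof.
apply/matrixP => i j; rewrite !mxE.
by case: i => [[|[|//]] ?]; case: j => [[|[|//]] ?]; rewrite /=; field.
Qed.

Lemma zmx_mulX_is1_val P A n : zmx_mulX_is1 P A n -> zmx_val P * zmx_val A ^+ n = 1.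
Proof.
elim: n P => [|n IHn] P /=; first by move=> /eqP ->; rewrite expr0 mulr1 zmx_val1.
by case/andP=> exactPA /IHn; rewrite zmx_val_mul4 // exprS mulrA.
Qed.

Definition zmx_s : zmx := ((4, 0, 0, 0), (0, 0, 0, 0), (0, 0, 0, 0), (-4, 0, 0, 0)).
Definition zmx_t : zmx := ((1, 1, -1, 1), (1, 1, -1, 1), (-1, 1, -1, -1), (1, -1, 1, 1)).
Definition zmx_u : zmx := ((1, 1, -1, 1), (-1, 1, -1, -1), (1, 1, -1, 1), (1, -1, 1, 1)).

Lemma zmx_val_s : zmx_val zmx_s = G7_s.
Proof.
apply/matrixP => i j; rewrite !mxE.
by case: i => [[|[|//]] ?]; case: j => [[|[|//]] ?]; rewrite /=; field.
Qed.

Lemma zmx_val_t : zmx_val zmx_t = G7_t.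
Proof.
rewrite /zmx_val /G7_t; congr (_ *: _); apply/matrixP => i j; rewrite !mxE.
by case: i => [[|[|//]] ?]; case: j => [[|[|//]] ?]; rewrite /=; ring.
Qed.

Lemma zmx_val_u : zmx_val zmx_u = G7_u.
Proof.
rewrite /G7_u -zmx_val_t /zmx_val linearZ; congr (_ *: _).
by apply/matrixP => i j; rewrite !mxE; case: i => [[|[|//]] ?]; case: j => [[|[|//]] ?].
Qed.

Definition zmx_gens : seq zmx := [:: zmx_s; zmx_t; zmx_u].

Definition zmx_grow (L : seq zmx) : seq zmx :=
  undup (L ++ [seq zmx_mul4 A g | A <- L, g <- zmx_gens]).

(* Eight rounds of closure reach all 144 elements; [G7_table_ok] certifies it. *)
Definition G7_table : seq zmx := iter 8 zmx_grow [:: zmx1].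

Definition G7_table_ok : bool :=
  [&& zmx1 \in G7_table,
      all (fun A => all (fun g => zmx_mul4_exact A g && (zmx_mul4 A g \in G7_table))
                        zmx_gens) G7_table
    & all (fun A => zmx_mulX_is1 zmx1 A 12) G7_table].

Lemma G7_tableP : G7_table_ok.
Proof. by vm_compute. Qed.

Definition in_G7_table (x : mx) : Prop := exists2 A, A \in G7_table & x = zmx_val A.

Definition G7_table_stable (x : mx) : Prop :=
  forall y, in_G7_table y -> in_G7_table (y * x).

Lemma in_G7_table1 : in_G7_table 1.
Proof. by case/and3P: G7_tableP => table1 _ _; exists zmx1; rewrite ?zmx_val1. Qed.

Lemma in_G7_table_exp x : in_G7_table x -> x ^+ 12 = 1.
Proof.
case=> A tableA ->; case/and3P: G7_tableP => _ _ /allP/(_ A tableA) /zmx_mulX_is1_val.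
by rewrite zmx_val1 mul1r.
Qed.

Lemma G7_table_stable1 : G7_table_stable 1.
Proof. by move=> y; rewrite mulr1. Qed.

Lemma G7_table_stableM x y :
  G7_table_stable x -> G7_table_stable y -> G7_table_stable (x * y).
Proof. by move=> sx sy z /sx /sy; rewrite mulrA. Qed.

Lemma G7_table_stableX x n : G7_table_stable x -> G7_table_stable (x ^+ n).
Proof.
move=> sx; elim: n => [|n IHn]; first exact: G7_table_stable1.
by rewrite exprS; apply: G7_table_stableM.
Qed.

Lemma G7_table_stable_gen g : g \in zmx_gens -> G7_table_stable (zmx_val g).
Proof.
move=> gensg y [A tableA ->].
case/and3P: G7_tableP => _ /allP/(_ A tableA) /allP/(_ g gensg) /andP [exactAg tableAg] _.
by exists (zmx_mul4 A g); rewrite ?zmx_val_mul4.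
Qed.

Lemma G7_table_stableV x : G7_table_stable x -> G7_table_stable (invmx x).
Proof.
move=> sx; have /in_G7_table_exp x12 : in_G7_table x.
  by rewrite -[x]mul1r; apply/sx/in_G7_table1.
by rewrite [invmx x](expr_eq1_inv x12); apply: G7_table_stableX.
Qed.

Lemma G7_table_stable_of_G7 x : G7 x -> G7_table_stable x.
Proof.
elim=> [|g gensg|y z _ sy _ sz|y _ sy].
- exact: G7_table_stable1.
- by case: gensg => [->|[->|->]]; rewrite -?zmx_val_s -?zmx_val_t -?zmx_val_u;
    apply: G7_table_stable_gen; rewrite !inE eqxx ?orbT.
- exact: G7_table_stableM.
- exact: G7_table_stableV.
Qed.

Theorem G7_exponent x : G7 x -> x ^+ 12 = 1.
Proof.
move=> /G7_table_stable_of_G7 sx; apply: in_G7_table_exp.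
by rewrite -[x]mul1r; apply/sx/in_G7_table1.
Qed.

Lemma gen_sub (S S' : mx -> Prop) :
  (forall x, S x -> gen S' x) -> forall x, gen S x -> gen S' x.
Proof.
move=> SS' x; elim=> {x} [|x /SS' //|x y _ S'x _ S'y|x _ S'x].
- exact: gen_one.
- exact: gen_mul.
- exact: gen_inv.
Qed.

Theorem lemma3p18 (R : mx -> Prop)
  (HR : forall r, R r -> G7 r /\ is_reflection r)
  (n m : nat)
  (Hn : num_refl_classes (gen R) n)
  (Hnm : (n <= m)%N)
  (Hsearch : forall k, (m < k)%N -> class_searchable (gen R) k)
  (Hbase : forall k, (1 <= k <= m)%N -> hurwitz_criterion (gen R) k) :
  forall k, (1 <= k)%N -> hurwitz_criterion (gen R) k.
Proof.
have R_exponent x : gen R x -> x ^+ 11.+1 = 1.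
  by move=> Rx; apply: G7_exponent; apply: gen_sub Rx => r /HR [].
have crit k : hurwitz_criterion (gen R) k.
  elim/ltn_ind: k => -[_|k IHk]; first exact: hurwitz_criterion0 (@gen_one R).
  have [le_km|lt_mk] := leqP k.+1 m; first exact: Hbase.
  apply: (hurwitz_criterion_succ (@gen_one R) (@gen_mul R) (@gen_inv R) R_exponent Hn).
  - exact: leq_ltn_trans Hnm lt_mk.
  - exact: Hsearch.
  - exact: IHk.
by move=> k _; apply: crit.
Qed.
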